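(* Let $\Phi$ be a channel matrix whose rows $P^1,\dots,P^4\in\Delta^n$ are in general position, let $Q^0$ be the equidistant point from $P^1,\dots,P^4$ and $\boldsymbol\lambda^0$ its barycentric coordinate. If $\lambda^0_i\ge0$ for $i=1,\dots,4$, then the output distribution achieving the channel capacity is $Q^\ast=Q^0$ and the channel capacity is $C=D(P^1\|Q^0)$.
   Context: $\Delta^n=\{Q:Q_j>0,\sum_jQ_j=1\}$, $\bar\Delta^m=\{\boldsymbol\lambda:\lambda_i\ge0,\sum_i\lambda_i=1\}$; $D(Q\|Q')=\sum_jQ_j\log(Q_j/Q'_j)$. Rows are in general position if $P^2-P^1,\dots,P^m-P^1$ are linearly independent. $L(S^1,\dots,S^r)=\{\sum_i\lambda_iS^i:\sum_i\lambda_i=1\}\cap\Delta^n$. The barycentric coordinate of $Q\in L(P^1,\dots,P^m)$ is the unique $\boldsymbol\lambda$ with $\sum_i\lambda_i=1$, $Q=\sum_i\lambda_iP^i$. The equidistant point is the unique $Q^0\in L(P^1,\dots,P^m)$ with all $D(P^i\|Q^0)$ equal. Mutual information $I(\boldsymbol\lambda,\Phi)=\sum_{i,j}\lambda_iP^i_j\log(P^i_j/Q_j)$ with $Q=\boldsymbol\lambda\Phi$; capacity $C=\max_{\boldsymbol\lambda\in\bar\Delta^m}I(\boldsymbol\lambda,\Phi)$; the capacity-achieving output distribution is $Q^\ast=\boldsymbol\lambda^\ast\Phi$ for a maximizer $\boldsymbol\lambda^\ast$ (unique). *)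

From HB Require Import structures.
From mathcomp Require Import all_boot all_order all_algebra.
From mathcomp Require Import all_classical all_reals all_analysis.
Set Implicit Arguments. Unset Strict Implicit. Unset Printing Implicit Defensive.
Import Order.TTheory GRing.Theory Num.Theory.
Local Open Scope classical_set_scope.
Local Open Scope ring_scope.

Section Defs.
Variable R : realType.

Definition in_open_simplex n (Q : 'rV[R]_n) : Prop :=
  (forall j, 0 < Q 0 j) /\ \sum_j Q 0 j = 1.

Definition in_closed_simplex m (l : 'rV[R]_m) : Prop :=
  (forall i, 0 <= l 0 i) /\ \sum_i l 0 i = 1.

Definition KL n (P Q : 'rV[R]_n) : R := \sum_j P 0 j * ln (P 0 j / Q 0 j).

Definition general_position m n (Phi : 'M[R]_(m.+1, n)) : bool :=
  row_free (\matrix_(i < m) (row (lift ord0 i) Phi - row ord0 Phi)).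

Definition in_affine_hull_simplex m n (Phi : 'M[R]_(m, n)) (Q : 'rV[R]_n) : Prop :=
  (exists l : 'rV[R]_m, \sum_i l 0 i = 1 /\ Q = l *m Phi) /\ in_open_simplex Q.

Definition barycentric m n (Phi : 'M[R]_(m, n)) (Q : 'rV[R]_n) (l : 'rV[R]_m) : Prop :=
  \sum_i l 0 i = 1 /\ Q = l *m Phi.

Definition equidistant_point m n (Phi : 'M[R]_(m, n)) (Q : 'rV[R]_n) : Prop :=
  in_affine_hull_simplex Phi Q /\
  forall i j, KL (row i Phi) Q = KL (row j Phi) Q.

Definition mutual_info m n (l : 'rV[R]_m) (Phi : 'M[R]_(m, n)) : R :=
  \sum_i \sum_j l 0 i * Phi i j * ln (Phi i j / (l *m Phi) 0 j).

Definition capacity m n (Phi : 'M[R]_(m, n)) : R :=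
  sup [set mutual_info l Phi | l in [set l | in_closed_simplex l]].

Definition capacity_achieving m n (Phi : 'M[R]_(m, n)) (l : 'rV[R]_m) : Prop :=
  in_closed_simplex l /\ mutual_info l Phi = capacity Phi.

End Defs.

(* For every input distribution l and every output distribution Q0,
   I(l, Phi) = sum_i l_i D(P^i || Q0) - D(l Phi || Q0).  When Q0 is
   equidistant from the rows, the first term is the common distance d, so
   I(l, Phi) = d - D(l Phi || Q0) <= d by Gibbs' inequality, with equality
   exactly when l Phi = Q0.  The nonnegative barycentric coordinate l0 of Q0
   is an admissible input attaining d, hence C = d and Q* = Q0. *)
From HB Require Import structures.
From mathcomp Require Import all_boot all_order all_algebra.
From mathcomp Require Import all_classical all_reals all_analysis.
From mathcomp Require Import ring lra.
Import Order.TTheory GRing.Theory Num.Theory.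
Local Open Scope ring_scope.

Section Divergence.
Context {R : realType}.

Lemma ln_le_subr1 (x : R) : 0 < x -> ln x <= x - 1.
Proof.
move=> x_gt0; have := expR_ge1Dx (ln x).
by rewrite lnK ?posrE // => ?; lra.
Qed.

Lemma ln_lt_subr1 (x : R) : 0 < x -> x != 1 -> ln x < x - 1.
Proof.
move=> x_gt0 x_neq1.
have lnx_neq0 : ln x != 0 by rewrite ln_eq0.
have := expR_gt1Dx lnx_neq0.
by rewrite lnK ?posrE // => ?; lra.
Qed.

Lemma mul_ln_div_eq (a b : R) : 0 < a -> 0 < b ->
  a * ln (a / b) = (a - b) + a * (b / a - 1 - ln (b / a)).
Proof.
move=> a_gt0 b_gt0.
rewrite -[a / b]invf_div lnV ?posrE ?divr_gt0 // !mulrBr mulrCA divff ?gt_eqF //.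
by rewrite mulr1; ring.
Qed.

Lemma subr_le_mul_ln_div (a b : R) : 0 < a -> 0 < b -> a - b <= a * ln (a / b).
Proof.
move=> a_gt0 b_gt0; rewrite mul_ln_div_eq // lerDl.
apply: mulr_ge0; first exact: ltW.
by rewrite subr_ge0 ln_le_subr1 // divr_gt0.
Qed.

Lemma mul_ln_div_eq_subr (a b : R) : 0 < a -> 0 < b ->
  a * ln (a / b) = a - b -> a = b.
Proof.
move=> a_gt0 b_gt0; rewrite mul_ln_div_eq // -[RHS]addr0 => /addrI /eqP.
rewrite mulf_eq0 gt_eqF //=.
apply: contraTeq => a_neq_b; rewrite gt_eqF // subr_gt0 ln_lt_subr1 ?divr_gt0 //.
by apply: contra a_neq_b => /eqP/divr1_eq ->.
Qed.

Context {n : nat}.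
Implicit Types P Q : 'rV[R]_n.

(* Each summand of the rewritten sum is nonnegative, which yields both
   Gibbs' inequality and its equality case. *)
Lemma KL_sum_subr P Q : in_open_simplex P -> in_open_simplex Q ->
  KL P Q = \sum_j (P 0 j * ln (P 0 j / Q 0 j) - (P 0 j - Q 0 j)).
Proof. by move=> [_ sumP] [_ sumQ]; rewrite !sumrB sumP sumQ subrr subr0. Qed.

Lemma KL_ge0 P Q : in_open_simplex P -> in_open_simplex Q -> 0 <= KL P Q.
Proof.
move=> oP oQ; rewrite KL_sum_subr //; apply: sumr_ge0 => j _.
by rewrite subr_ge0 subr_le_mul_ln_div ?oP.1 ?oQ.1.
Qed.

Lemma KL_eq0 P Q : in_open_simplex P -> in_open_simplex Q ->
  KL P Q = 0 -> P = Q.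
Proof.
move=> oP oQ; rewrite KL_sum_subr // => /eqP.
rewrite psumr_eq0 => [/allP summands0|j _]; last first.
  by rewrite subr_ge0 subr_le_mul_ln_div ?oP.1 ?oQ.1.
apply/rowP => j; apply: mul_ln_div_eq_subr; rewrite ?oP.1 ?oQ.1 //.
by apply/eqP; rewrite -subr_eq0; exact: (implyP (summands0 j (mem_index_enum _))).
Qed.

Lemma KL_self Q : KL Q Q = 0.
Proof.
rewrite /KL big1 // => j _.
have [->|Qj_neq0] := eqVneq (Q 0 j) 0; first by rewrite mul0r.
by rewrite divff // ln1 mulr0.
Qed.

End Divergence.

Section Channel.
Context {R : realType} {m n : nat} {Phi : 'M[R]_(m, n)}.
Hypothesis rows_open : forall i, in_open_simplex (row i Phi).

Lemma channel_entry_gt0 i j : 0 < Phi i j.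
Proof. by have := (rows_open i).1 j; rewrite mxE. Qed.

Lemma output_gt0 {l} : in_closed_simplex l -> forall j, 0 < (l *m Phi) 0 j.
Proof.
move=> [l_ge0 sum_l] j; rewrite mxE lt_def sumr_ge0 ?andbT; last first.
  by move=> i _; rewrite mulr_ge0 // ltW // channel_entry_gt0.
apply/negP; rewrite psumr_eq0 => [/allP terms0|i _]; last first.
  by rewrite mulr_ge0 // ltW // channel_entry_gt0.
have : \sum_i l 0 i = 0.
  apply: big1 => i _; have /implyP/(_ isT) := terms0 i (mem_index_enum _).
  by rewrite mulf_eq0 (gt_eqF (channel_entry_gt0 _ _)) orbF => /eqP.
by rewrite sum_l => /eqP; rewrite oner_eq0.
Qed.

Lemma output_sum1 {l} : in_closed_simplex l -> \sum_j (l *m Phi) 0 j = 1.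
Proof.
move=> [_ sum_l]; under eq_bigr do rewrite mxE.
rewrite exchange_big -sum_l; apply: eq_bigr => i _.
rewrite -mulr_sumr -[X in _ * X = _]/(\sum_j Phi i j).
by have := (rows_open i).2; under eq_bigr do rewrite mxE; move=> ->; rewrite mulr1.
Qed.

Lemma output_open {l} : in_closed_simplex l -> in_open_simplex (l *m Phi).
Proof. by move=> l_cl; split; [exact: output_gt0|exact: output_sum1]. Qed.

Lemma mutual_info_KL {Q : 'rV[R]_n} {l} :
  in_open_simplex Q -> in_closed_simplex l ->
  mutual_info l Phi = \sum_i l 0 i * KL (row i Phi) Q - KL (l *m Phi) Q.
Proof.
move=> oQ l_cl.
have split_log i j : l 0 i * Phi i j * ln (Phi i j / (l *m Phi) 0 j) =
    l 0 i * (Phi i j * ln (Phi i j / Q 0 j)) -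
    l 0 i * Phi i j * ln ((l *m Phi) 0 j / Q 0 j).
  have := channel_entry_gt0 i j; have := output_gt0 l_cl j; have := oQ.1 j.
  by move=> *; rewrite !ln_div ?posrE //; ring.
rewrite /mutual_info.
under eq_bigr do under eq_bigr do rewrite split_log.
under eq_bigr do rewrite sumrB -mulr_sumr.
rewrite sumrB /KL; congr (_ - _).
  by apply: eq_bigr => i _; congr (_ * _); apply: eq_bigr => j _; rewrite mxE.
rewrite exchange_big; apply: eq_bigr => j _.
by rewrite [X in _ = X * _]mxE mulr_suml.
Qed.

Lemma mutual_info_equidistant {Q : 'rV[R]_n} {d l} :
  in_open_simplex Q -> (forall i, KL (row i Phi) Q = d) ->
  in_closed_simplex l -> mutual_info l Phi = d - KL (l *m Phi) Q.
Proof.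
move=> oQ dist_d l_cl; rewrite (mutual_info_KL oQ l_cl).
under eq_bigr do rewrite dist_d.
by rewrite -mulr_suml l_cl.2 mul1r.
Qed.

Lemma capacity_attained {d l0} :
  (forall l, in_closed_simplex l -> mutual_info l Phi <= d) ->
  in_closed_simplex l0 -> mutual_info l0 Phi = d -> capacity Phi = d.
Proof.
move=> mi_le_d l0_cl mi_l0; apply/le_anti/andP; split.
  by apply: ge_sup => [|_ [l l_cl <-]]; [exists d, l0 | exact: mi_le_d].
apply: sup_upper_bound; last by exists l0.
by split; [exists d, l0 | exists d => _ [l l_cl <-]; exact: mi_le_d].
Qed.

End Channel.

Theorem theorem17 (R : realType) (n : nat) (Phi : 'M[R]_(4, n))
    (Q0 : 'rV[R]_n) (l0 : 'rV[R]_4) :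
  (forall i : 'I_4, in_open_simplex (row i Phi)) ->
  general_position Phi ->
  equidistant_point Phi Q0 ->
  barycentric Phi Q0 l0 ->
  (forall i : 'I_4, 0 <= l0 0 i) ->
  [/\ capacity Phi = KL (row 0 Phi) Q0,
      exists l, capacity_achieving Phi l
    & forall l, capacity_achieving Phi l -> l *m Phi = Q0].
Proof.
move=> rows_open _ [[_ oQ0] equi] [sum_l0 Q0_def] l0_ge0.
set d := KL (row 0 Phi) Q0.
have dist_d i : KL (row i Phi) Q0 = d by exact: equi.
have l0_cl : in_closed_simplex l0 by [].
have mi_eq l : in_closed_simplex l -> mutual_info l Phi = d - KL (l *m Phi) Q0.
  by move=> l_cl; rewrite (mutual_info_equidistant rows_open oQ0 dist_d l_cl).
have mi_le_d l : in_closed_simplex l -> mutual_info l Phi <= d.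
  move=> l_cl; rewrite mi_eq // gerBl KL_ge0 //; exact: output_open.
have mi_l0 : mutual_info l0 Phi = d by rewrite mi_eq // -Q0_def KL_self subr0.
have cap_d := capacity_attained mi_le_d l0_cl mi_l0.
split => //; first by exists l0; rewrite /capacity_achieving cap_d.
move=> l [l_cl]; rewrite cap_d mi_eq // -[RHS]subr0 => /addrI /oppr_inj KL0.
by apply: KL_eq0 => //; exact: output_open.
Qed.
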